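(* Let $D$ be a discrete semigroup such that for some $c\in D$ the set $D_c=\{(x,y)\in D\times D:xy=c\}$ is infinite, and let $\pi:D\to M$ be a homomorphism into a Hausdorff topological semigroup $M$. If $S=D\cup_\pi M$ is a topological semigroup, then $D_c$ is an open-and-closed discrete subspace of $S\times S$, and consequently $S\times S$ is not pseudocompact.
   Context: For a discrete space $D$: if $D$ is infinite, $\alpha D=D\cup\{\infty\}$ is its one-point compactification; if $D$ is finite, $\alpha D$ is the topological sum of $D$ and an isolated point $\infty\notin D$. For a map $\pi:D\to M$, $D\cup_\pi M$ is the subspace $\{(x,\pi(x)):x\in D\}\cup(\{\infty\}\times M)$ of $\alpha D\times M$, with $D$ identified with $\{(x,\pi(x))\}$ and $M$ with $\{\infty\}\times M$. It carries the semigroup operation extending those of $D$ and $M$ by $xy=\pi(x)y$ for $x\in D,y\in M$ and $xy=x\pi(y)$ for $x\in M,y\in D$. A space is pseudocompact if every locally finite open cover is finite. *)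

From Stdlib Require Import List.
Set Implicit Arguments.

Definition topology (X : Type) := (X -> Prop) -> Prop.

Definition is_topology (X : Type) (op : topology X) : Prop :=
  op (fun _ => True) /\
  (forall U V, op U -> op V -> op (fun x => U x /\ V x)) /\
  (forall F : (X -> Prop) -> Prop, (forall U, F U -> op U) ->
      op (fun x => exists U, F U /\ U x)).

Definition closed (X : Type) (op : topology X) (A : X -> Prop) : Prop :=
  op (fun x => ~ A x).

Definition clopen (X : Type) (op : topology X) (A : X -> Prop) : Prop :=
  op A /\ closed op A.

Definition finite_set (X : Type) (A : X -> Prop) : Prop :=
  exists l : list X, forall x, A x -> In x l.

Definition prod_top (X Y : Type) (oX : topology X) (oY : topology Y)
  : topology (X * Y) :=
  fun W => forall p, W p -> exists U V, oX U /\ oY V /\ U (fst p) /\ V (snd p) /\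
      (forall q, U (fst q) -> V (snd q) -> W q).

Definition continuous (X Y : Type) (oX : topology X) (oY : topology Y)
  (f : X -> Y) : Prop :=
  forall V, oY V -> oX (fun x => V (f x)).

Definition hausdorff (X : Type) (op : topology X) : Prop :=
  forall x y, x <> y -> exists U V, op U /\ op V /\ U x /\ V y /\
      (forall z, U z -> V z -> False).

Definition associative_op (X : Type) (m : X -> X -> X) : Prop :=
  forall x y z, m x (m y z) = m (m x y) z.

Definition topological_semigroup (X : Type) (op : topology X) (m : X -> X -> X)
  : Prop :=
  associative_op m /\
  continuous (prod_top op op) op (fun p => m (fst p) (snd p)).

Definition discrete_subspace (X : Type) (op : topology X) (A : X -> Prop) : Prop :=
  forall p, A p -> exists W, op W /\ W p /\ (forall q, A q -> W q -> q = p).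

(** Pseudocompactness: every locally finite open cover is finite.
    A cover is a collection of subsets; finiteness of collections is taken
    up to extensional equality of subsets. *)
Definition ext_eq (X : Type) (U V : X -> Prop) : Prop := forall x, U x <-> V x.

Definition finite_family (X : Type) (C : (X -> Prop) -> Prop) : Prop :=
  exists l : list (X -> Prop), forall U, C U -> exists V, In V l /\ ext_eq U V.

Definition open_cover (X : Type) (op : topology X) (C : (X -> Prop) -> Prop) : Prop :=
  (forall U, C U -> op U) /\ (forall x, exists U, C U /\ U x).

Definition locally_finite (X : Type) (op : topology X) (C : (X -> Prop) -> Prop)
  : Prop :=
  forall x, exists N, op N /\ N x /\
    finite_family (fun U => C U /\ exists y, N y /\ U y).

Definition pseudocompact (X : Type) (op : topology X) : Prop :=
  forall C, open_cover op C -> locally_finite op C -> finite_family C.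

(** alpha D, carried by option D with None = infinity.  For infinite D this is the
    one-point compactification of discrete D; for finite D every set is open,
    i.e. the topological sum of D and an isolated point. *)
Definition alpha_top (D : Type) : topology (option D) :=
  fun U => U None -> finite_set (fun x : D => ~ U (Some x)).

(** D \cup_pi M, carried by D + M, embedded in alpha D x M by
    inl x |-> (x, pi x), inr m |-> (infinity, m); subspace topology. *)
Definition union_embed (D M : Type) (pi : D -> M) (s : D + M) : option D * M :=
  match s with
  | inl x => (Some x, pi x)
  | inr m => (None, m)
  end.

Definition union_top (D M : Type) (pi : D -> M) (oM : topology M)
  : topology (D + M) :=
  fun U => exists V, prod_top (@alpha_top D) oM V /\
             (forall s, U s <-> V (union_embed pi s)).

Definition union_mul (D M : Type) (mD : D -> D -> D) (mM : M -> M -> M)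
  (pi : D -> M) (s t : D + M) : D + M :=
  match s, t with
  | inl x, inl y => inl (mD x y)
  | inl x, inr y => inr (mM (pi x) y)
  | inr x, inl y => inr (mM x (pi y))
  | inr x, inr y => inr (mM x y)
  end.

Definition Dc_set (D M : Type) (mD : D -> D -> D) (c : D) (p : (D + M) * (D + M))
  : Prop :=
  exists x y, p = (inl x, inl y) /\ mD x y = c.

(* Corollary 3.3.  Let S = D ∪_π M be a topological semigroup and c ∈ D with
   D_c = {(x,y) : xy = c} infinite.  The argument only uses the continuity of
   the multiplication of S:

   - every point of D is isolated in S, and {c} is also closed in S, because
     {Some x} and its complement are open in αD;
   - hence D_c, the preimage of {c} under the continuous multiplication
     S × S → S, is clopen in S × S, and each of its points (x,y) is isolated,
     being the product of the isolated points x and y;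
   - a space containing an infinite clopen set of isolated points is not
     pseudocompact: the complement of the set together with its singletons
     is a locally finite open cover with infinitely many members. *)

From Stdlib Require Import List Classical.

Definition singleton {X : Type} (x : X) : X -> Prop := fun y => y = x.

(* This
   transfers finiteness along injective maps, and from finite families of
   singletons to sets of points. *)
Lemma finite_pullback {I X : Type} (R : I -> X -> Prop) (P : I -> Prop)
  (l : list X)
  (R_inj : forall i i' x, R i x -> R i' x -> i = i')
  (covered : forall i, P i -> exists x, In x l /\ R i x) :
  finite_set P.
Proof.
  assert (preimage_list :
            exists L, forall i, (exists x, In x l /\ R i x) -> In i L).
  { clear covered. induction l as [|x l [L HL]].
    - exists nil. intros i [x [[] _]].
    - destruct (classic (exists i0, R i0 x)) as [[i0 Ri0]|no_preimage].
      + exists (i0 :: L). intros i [x' [[<-|Hin] Rix]].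
        * left. exact (R_inj _ _ _ Ri0 Rix).
        * right. apply HL. eauto.
      + exists L. intros i [x' [[<-|Hin] Rix]].
        * exfalso. eauto.
        * apply HL. eauto. }
  destruct preimage_list as [L HL]. exists L. auto.
Qed.

Lemma prod_top_ext {X Y : Type} {oX : topology X} {oY : topology Y}
  {W W' : X * Y -> Prop} :
  prod_top oX oY W -> (forall p, W' p <-> W p) -> prod_top oX oY W'.
Proof.
  intros HW E p Wp. apply E in Wp.
  destruct (HW p Wp) as [U [V [HU [HV [Up [Vp sub]]]]]].
  exists U, V. repeat split; auto. intros q Uq Vq. apply E. auto.
Qed.

Lemma prod_clopen_ext {X Y : Type} {oX : topology X} {oY : topology Y}
  {W W' : X * Y -> Prop} :
  clopen (prod_top oX oY) W -> (forall p, W' p <-> W p) ->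
  clopen (prod_top oX oY) W'.
Proof.
  intros [HW HWc] E. split.
  - exact (prod_top_ext HW E).
  - apply (prod_top_ext HWc). intro p. rewrite E. tauto.
Qed.

Lemma prod_rect {X Y : Type} {oX : topology X} {oY : topology Y}
  {A : X -> Prop} {B : Y -> Prop} :
  oX A -> oY B -> prod_top oX oY (fun q => A (fst q) /\ B (snd q)).
Proof.
  intros HA HB p [Ap Bp]. exists A, B. repeat split; auto.
Qed.

Lemma isolated_pair {X Y : Type} {oX : topology X} {oY : topology Y}
  {x : X} {y : Y} :
  oX (singleton x) -> oY (singleton y) -> prod_top oX oY (singleton (x, y)).
Proof.
  intros Hx Hy. apply (prod_top_ext (prod_rect Hx Hy)).
  intros [x' y']. unfold singleton. simpl. split.
  - intro E. injection E. auto.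
  - intros [-> ->]. reflexivity.
Qed.

Lemma clopen_preimage {X Y : Type} {oX : topology X} {oY : topology Y}
  {f : X -> Y} {A : Y -> Prop} :
  continuous oX oY f -> clopen oY A -> clopen oX (fun x => A (f x)).
Proof.
  intros Hf [HA HAc]. split.
  - exact (Hf _ HA).
  - exact (Hf _ HAc).
Qed.

Lemma discrete_of_isolated {X : Type} {op : topology X} {A : X -> Prop} :
  (forall x, A x -> op (singleton x)) -> discrete_subspace op A.
Proof.
  intros iso x Ax. exists (singleton x). repeat split; auto.
Qed.

(* If A is clopen, infinite and consists of isolated points, the cover by the
   complement of A and the singletons of A is open and locally finite (each
   point has a neighbourhood meeting exactly one member) but not finite. *)
Lemma not_pseudocompact_of_clopen_discrete {X : Type} {op : topology X}
  {A : X -> Prop} :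
  clopen op A -> (forall x, A x -> op (singleton x)) -> ~ finite_set A ->
  ~ pseudocompact op.
Proof.
  intros [_ A_closed] iso A_inf pc.
  set (C := fun U : X -> Prop =>
              U = (fun x => ~ A x) \/ exists x, A x /\ U = singleton x).
  assert (C_cover : open_cover op C).
  { split.
    - intros U [->|[x [Ax ->]]]; auto.
    - intro x. destruct (classic (A x)) as [Ax|nAx].
      + exists (singleton x). split; [right; eauto | reflexivity].
      + exists (fun x => ~ A x). split; [left|]; auto. }
  assert (C_locfin : locally_finite op C).
  { intro x. destruct (classic (A x)) as [Ax|nAx].
    - exists (singleton x). repeat split; auto.
      exists (singleton x :: nil).
      intros U [[->|[x' [_ ->]]] [y [Ny Uy]]]; unfold singleton in *.
      + subst y. contradiction.
      + exists (singleton x). split; [left; reflexivity|].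
        intro z. unfold singleton. subst. tauto.
    - exists (fun x => ~ A x). repeat split; auto.
      exists ((fun x => ~ A x) :: nil).
      intros U [[->|[x' [Ax' ->]]] [y [Ny Uy]]].
      + exists (fun x => ~ A x). split; [left; reflexivity|]. intro z. tauto.
      + unfold singleton in Uy. subst. contradiction. }
  destruct (pc C C_cover C_locfin) as [l Hl].
  apply A_inf.
  apply (@finite_pullback X _ (fun x V => ext_eq (singleton x) V) A l).
  - intros x x' V Ex Ex'. apply Ex'. apply Ex. reflexivity.
  - intros x Ax. destruct (Hl (singleton x)) as [V HV]; [right; eauto|].
    exists V. exact HV.
Qed.

Section UnionSpace.

Context {D M : Type} {oM : topology M} {pi : D -> M}.
Hypothesis oM_whole : oM (fun _ => True).

Lemma union_top_of_alpha {U : option D -> Prop} {W : D + M -> Prop} :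
  alpha_top U -> (forall s, W s <-> U (fst (union_embed pi s))) ->
  union_top pi oM W.
Proof.
  intros HU E. exists (fun z => U (fst z)). split; [|exact E].
  apply (prod_top_ext (prod_rect HU oM_whole)). intro z. tauto.
Qed.

Lemma alpha_open_point (x : D) : alpha_top (singleton (Some x)).
Proof. intro H. discriminate H. Qed.

Lemma alpha_open_copoint (x : D) : alpha_top (fun o => o <> Some x).
Proof.
  intros _. exists (x :: nil). intros y Hy. left.
  apply NNPP in Hy. congruence.
Qed.

Lemma union_point_clopen (x : D) : clopen (union_top pi oM) (singleton (inl x)).
Proof.
  split.
  - apply (union_top_of_alpha (alpha_open_point x)).
    intros [y|m]; unfold singleton; simpl; split; congruence.
  - apply (union_top_of_alpha (alpha_open_copoint x)).
    intros [y|m]; unfold singleton; simpl; split; intros H E; apply H; congruence.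
Qed.

Context {mD : D -> D -> D} {mM : M -> M -> M}.
Variable c : D.

Lemma union_mul_eq_iff_Dc (p : (D + M) * (D + M)) :
  Dc_set mD c p <-> union_mul mD mM pi (fst p) (snd p) = inl c.
Proof.
  destruct p as [[x|m] [y|n]]; simpl; split;
    try (intros [x' [y' [E _]]]; discriminate E); try discriminate.
  - intros [x' [y' [E Hc]]]. injection E. intros -> ->. congruence.
  - intro E. exists x, y. split; congruence.
Qed.

Lemma Dc_clopen :
  continuous (prod_top (union_top pi oM) (union_top pi oM)) (union_top pi oM)
    (fun p => union_mul mD mM pi (fst p) (snd p)) ->
  clopen (prod_top (union_top pi oM) (union_top pi oM)) (@Dc_set D M mD c).
Proof.
  intro cont.
  apply (prod_clopen_ext (clopen_preimage cont (union_point_clopen c))).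
  intro p. rewrite union_mul_eq_iff_Dc. unfold singleton. tauto.
Qed.

Lemma Dc_isolated (p : (D + M) * (D + M)) :
  Dc_set mD c p ->
  prod_top (union_top pi oM) (union_top pi oM) (singleton p).
Proof.
  intros [x [y [-> _]]].
  apply isolated_pair; apply union_point_clopen.
Qed.

End UnionSpace.

Lemma Dc_infinite {D : Type} (M : Type) {mD : D -> D -> D} {c : D} :
  ~ finite_set (fun p : D * D => mD (fst p) (snd p) = c) ->
  ~ finite_set (@Dc_set D M mD c).
Proof.
  intros Dc_inf [l Hl]. apply Dc_inf.
  apply (@finite_pullback _ _ (fun p q => q = (inl (fst p), inl (snd p))) _ l).
  - intros [x y] [x' y'] q -> E. simpl in E. congruence.
  - intros [x y] Hc. exists (inl x, inl y). split; [|reflexivity].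
    apply Hl. exists x, y. auto.
Qed.

Theorem corollary3p3
  (D : Type) (mD : D -> D -> D) (assocD : associative_op mD)
  (M : Type) (oM : topology M) (mM : M -> M -> M)
  (topM : is_topology oM) (hausM : hausdorff oM)
  (tsM : topological_semigroup oM mM)
  (pi : D -> M) (hom : forall x y, pi (mD x y) = mM (pi x) (pi y))
  (c : D) (Dc_inf : ~ finite_set (fun p : D * D => mD (fst p) (snd p) = c))
  (tsS : topological_semigroup (union_top pi oM) (union_mul mD mM pi)) :
  clopen (prod_top (union_top pi oM) (union_top pi oM)) (@Dc_set D M mD c) /\
  discrete_subspace (prod_top (union_top pi oM) (union_top pi oM)) (@Dc_set D M mD c) /\
  ~ pseudocompact (prod_top (union_top pi oM) (union_top pi oM)).
Proof.
  destruct tsS as [_ cont].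
  destruct topM as [oM_whole _].
  pose proof (Dc_clopen oM_whole c cont) as clopen_Dc.
  split; [exact clopen_Dc | split].
  - apply discrete_of_isolated. exact (Dc_isolated oM_whole c).
  - exact (not_pseudocompact_of_clopen_discrete clopen_Dc
             (Dc_isolated oM_whole c) (Dc_infinite M Dc_inf)).
Qed.
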